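(* Consider the coupled vapour/liquid heat equations on fixed (transformed) domains \[ \beta_v\big((J_v T_v)_\tau + (a_v T_v)_\xi\big) = k_v\big(J_v^{-1} T_{v,\xi}\big)_\xi,\quad \xi\in\Omega_v=[\xi_0,\delta],\qquad \beta_l\big((J_l T_l)_\tau + (a_l T_l)_\eta\big) = k_l\big(J_l^{-1} T_{l,\eta}\big)_\eta,\quad \eta\in\Omega_l=[\delta,\eta_n], \] with the interface conditions imposed strongly, $T_v = T_l = T_\delta$ at the interface $\xi=\eta=\delta$, where the transformed wave speeds are $a_v = u_v - x_\tau$, $a_l = u_l - x_\tau$, the interface (mesh) velocity $\tilde u_\delta = x_\tau$ at the interface satisfies \[ \rho_v h_{lv}\,\tilde u_\delta = \big[k_l J_l^{-1} T_{l,\eta} - k_v J_v^{-1} T_{v,\xi}\big]_\delta , \] and the interface mass relation $(u_l)_\delta = \gamma (u_v)_\delta + (1-\gamma)\tilde u_\delta$, $\gamma=\rho_v/\rho_l$, holds, so that $(a_v)_\delta = (u_v)_\delta - \tilde u_\delta$ and $(a_l)_\delta = \gamma (a_v)_\delta$. Then, ignoring outer boundary contributions, this strong interface treatment is dissipative and energy bounded if $(a_v)_\delta<0$ and $\tilde u_\delta \ge 0$, and it is energy bounded otherwise.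
   Context: Physical setting: a one-dimensional two-phase (vapour $v$, liquid $l$) evaporation problem with a moving evaporation interface $x_\delta(t)$, originally $\beta_v((T_v)_t + u_v (T_v)_x) = k_v (T_v)_{xx}$ on $[x_0,x_\delta]$ and $\beta_l((T_l)_t + u_l (T_l)_x) = k_l (T_l)_{xx}$ on $[x_\delta,x_n]$, with $T_v=T_l=T_\delta$ at $x_\delta(t)$. Here $T$ is temperature, $\rho$ density, $C_p$ specific heat at constant pressure, $k>0$ the scaled heat conduction coefficient, $\beta=\rho C_p>0$; the given evaporation temperature $T_\delta>0$ and latent heat $h_{lv}>0$ are external data; the velocities $u_v,u_l$ are positive. The problem is mapped to fixed domains by time-dependent coordinate transformations $x=x(\xi,\tau)$ (vapour), $x=x(\eta,\tau)$ (liquid), $t=\tau$, with Jacobians $J_v,J_l>0$ satisfying $J_v\xi_x=1$, $J_v\xi_t=-x_\tau$, $(J_v)_\tau+(J_v\xi_t)_\xi=0$ and analogously $J_l\eta_x=1$, $J_l\eta_t=-x_\tau$, $(J_l)_\tau+(J_l\eta_t)_\eta=0$. The paper asserts that $C_0=(\beta_l\gamma-\beta_v)T_\delta^2=\rho_v[(C_p)_l-(C_p)_v]T_\delta^2>0$ and $C_1=2T_\delta\rho_v h_{lv}>0$. The energy is $E(\tau)=\beta_v\int_{\xi_0}^{\delta}T_v^2J_v\,d\xi+\beta_l\int_\delta^{\eta_n}T_l^2J_l\,d\eta$; ''energy bounded'' means (with outer-boundary terms ignored) that $E$ at any time is bounded by its initial value plus the time integral of interface terms that are bounded in terms of the given data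 (using e.g. that $\int_0^t\tilde u_\delta\,d\tau = x_\delta(t)-x_\delta(0)$ is bounded by the domain size); ''dissipative'' means the interface terms in the energy rate $\frac{dE}{d\tau}+2k_v\int J_v^{-1}T_{v,\xi}^2d\xi+2k_l\int J_l^{-1}T_{l,\eta}^2d\eta$ are non-positive. *)

From Stdlib Require Import Reals.
From Coquelicot Require Import Coquelicot.
Open Scope R_scope.

Definition dx (f : R -> R -> R) : R -> R -> R :=
  fun x t => Derive (fun y => f y t) x.
Definition dt (f : R -> R -> R) : R -> R -> R :=
  fun x t => Derive (fun s => f x s) t.

Definition C1_2d (f : R -> R -> R) : Prop :=
  (forall x t, ex_derive (fun y => f y t) x) /\
  (forall x t, ex_derive (fun s => f x s) t) /\
  (forall x t, continuity_2d_pt f x t) /\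
  (forall x t, continuity_2d_pt (dx f) x t) /\
  (forall x t, continuity_2d_pt (dt f) x t).

Definition C2_2d (f : R -> R -> R) : Prop :=
  C1_2d f /\ C1_2d (dx f) /\ C1_2d (dt f).

(* Energy E(tau) = beta_v int_{xi0}^{delta} T_v^2 J_v + beta_l int_{delta}^{eta_n} T_l^2 J_l,
   with J = x_xi (J xi_x = 1). *)
Definition energy (bv bl xi0 delta etan : R) (Tv xv Tl xl : R -> R -> R) (t : R) : R :=
  bv * RInt (fun xi => Tv xi t ^ 2 * dx xv xi t) xi0 delta
  + bl * RInt (fun eta => Tl eta t ^ 2 * dx xl eta t) delta etan.

Definition dissipation (kv kl xi0 delta etan : R) (Tv xv Tl xl : R -> R -> R) (t : R) : R :=
  2 * kv * RInt (fun xi => / dx xv xi t * dx Tv xi t ^ 2) xi0 delta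
  + 2 * kl * RInt (fun eta => / dx xl eta t * dx Tl eta t ^ 2) delta etan.

(* Outer boundary contributions (at xi = xi0 and eta = eta_n) to dE/dtau + dissipation,
   with transformed wave speeds a = u - x_tau. These are the terms that are "ignored". *)
Definition outer_terms (bv bl kv kl xi0 etan : R) (Tv xv Tl xl : R -> R -> R)
    (uv ul : R -> R) (t : R) : R :=
  bv * (uv t - dt xv xi0 t) * Tv xi0 t ^ 2
  - 2 * kv * Tv xi0 t * / dx xv xi0 t * dx Tv xi0 t
  - bl * (ul t - dt xl etan t) * Tl etan t ^ 2
  + 2 * kl * Tl etan t * / dx xl etan t * dx Tl etan t.

From Stdlib Require Import Reals Lra.
From Coquelicot Require Import Coquelicot.
Open Scope R_scope.

(* Multiplying each heat equation by 2T and using the geometric conservation law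
   (J)_tau = (x_tau)_xi gives the local balance
     (beta T^2 J)_tau + 2 k J^-1 T_xi^2 = (F)_xi,   F = - beta a T^2 + 2 k T J^-1 T_xi,
   so integrating over both phases yields dE/dtau + D = B + F_v(delta) - F_l(delta).
   At the interface T = T_delta, (a_l)_delta = gamma (a_v)_delta, and the Stefan condition
   replaces the conductive fluxes by latent heat, so that
     F_v(delta) - F_l(delta) = C0 (a_v)_delta - C1 u~_delta.
   Both terms are non-positive when (a_v)_delta < 0 <= u~_delta; in general they integrate
   to C0 int u_v - (C0 + C1) (x_delta(t) - x_delta(0)). *)

Lemma continuity_2d_pt_fst (f : R -> R -> R) (x y : R) :
  continuity_2d_pt f x y -> continuous (fun z => f z y) x.
Proof.
  intros Hf. apply continuity_pt_filterlim, continuity_pt_locally. intros eps.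
  destruct (Hf eps) as [d Hd]. exists d. intros z Hz. apply Hd; [exact Hz|].
  rewrite Rminus_eq_0, Rabs_R0. apply cond_pos.
Qed.

Lemma continuity_2d_pt_swap (f : R -> R -> R) (x y : R) :
  continuity_2d_pt f x y -> continuity_2d_pt (fun u v => f v u) y x.
Proof.
  intros Hf eps. destruct (Hf eps) as [d Hd]. exists d. intros u v Hu Hv. now apply Hd.
Qed.

Lemma continuity_2d_pt_snd (f : R -> R -> R) (x y : R) :
  continuity_2d_pt f x y -> continuous (fun z => f x z) y.
Proof. intros Hf. apply (continuity_2d_pt_fst (fun u v => f v u)), continuity_2d_pt_swap, Hf. Qed.

Lemma continuity_2d_pt_sqr (f : R -> R -> R) (x y : R) :
  continuity_2d_pt f x y -> continuity_2d_pt (fun u v => f u v ^ 2) x y.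
Proof.
  intros Hf. apply continuity_2d_pt_ext with (fun u v => f u v * f u v).
  - intros; ring.
  - now apply continuity_2d_pt_mult.
Qed.

Lemma continuity_2d_pt_time (f : R -> R) (x y : R) :
  continuous f y -> continuity_2d_pt (fun _ v => f v) x y.
Proof.
  intros Hf. apply (continuity_1d_2d_pt_comp f (fun _ v => v)).
  - now apply continuity_pt_filterlim.
  - apply continuity_2d_pt_id2.
Qed.

Ltac continuity_2d :=
  repeat first
    [ apply continuity_2d_pt_plus | apply continuity_2d_pt_minus
    | apply continuity_2d_pt_mult | apply continuity_2d_pt_opp
    | apply continuity_2d_pt_sqr | apply continuity_2d_pt_const
    | match goal with
      | H : forall _ _, continuity_2d_pt ?f _ _ |- continuity_2d_pt ?f _ _ => apply H
      end ].

Lemma is_derive_RInt_continuous (f : R -> R) (a s : R) :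
  (forall z, continuous f z) -> is_derive (fun y => RInt f a y) s (f s).
Proof.
  intros Hf. apply (is_derive_RInt f _ a).
  - apply filter_forall. intros y. apply (RInt_correct f a y).
    apply (ex_RInt_continuous f a y). intros z _. apply Hf.
  - apply Hf.
Qed.

Lemma continuous_Rmax_0 (s : R) : continuous (fun y => Rmax y 0) s.
Proof.
  apply continuity_pt_filterlim, continuity_pt_locally. intros eps.
  exists eps. intros u Hu. change (Rabs (u - s) < eps) in Hu.
  apply Rabs_def2 in Hu. apply Rabs_def1; unfold Rmax;
    destruct (Rle_dec u 0), (Rle_dec s 0); lra.
Qed.

Lemma le_RInt_of_is_derive_le (g dg h : R -> R) (t : R) :
  (forall s, 0 <= s -> is_derive g s (dg s)) ->
  (forall s, 0 <= s -> continuous h s) ->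
  (forall s, 0 <= s -> dg s <= h s) ->
  0 <= t -> g t <= g 0 + RInt h 0 t.
Proof.
  intros Hg Hh Hle Ht.
  (* [h] is only continuous on [0, +oo); clamping its argument gives a primitive that is
     differentiable, hence continuous, on a neighbourhood of the endpoint 0 as well. *)
  set (hc := fun s => h (Rmax s 0)).
  assert (hc_cont : forall s, continuous hc s).
  { intros s. apply (continuous_comp (fun y => Rmax y 0) h).
    - apply continuous_Rmax_0.
    - apply Hh, Rmax_r. }
  assert (Hprimitive : forall s, 0 <= s ->
            is_derive (fun s => g s - RInt hc 0 s) s (dg s - hc s)).
  { intros s Hs. apply (is_derive_minus g); [now apply Hg |].
    now apply is_derive_RInt_continuous. }
  assert (Hclamp : RInt h 0 t = RInt hc 0 t).
  { apply RInt_ext. intros z Hz. rewrite Rmin_left in Hz by lra.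
    unfold hc. now rewrite Rmax_left by lra. }
  destruct (MVT_gen (fun s => g s - RInt hc 0 s) 0 t (fun s => dg s - hc s))
    as [c [Hc Hmvt]].
  - intros s Hs. rewrite Rmin_left, Rmax_right in Hs by lra. apply Hprimitive. lra.
  - intros s Hs. rewrite Rmin_left, Rmax_right in Hs by lra.
    apply continuity_pt_filterlim, (ex_derive_continuous (fun s => g s - RInt hc 0 s)).
    eexists. apply Hprimitive. lra.
  - rewrite Rmin_left, Rmax_right in Hc by lra.
    assert (dg c <= hc c) by (unfold hc; rewrite Rmax_left by lra; apply Hle; lra).
    rewrite (RInt_point 0 hc : RInt hc 0 0 = 0) in Hmvt.
    rewrite Hclamp. nra.
Qed.

Lemma energy_le_of_rate (E B D v xd : R -> R) (C0 C1 t : R) :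
  (forall s, 0 <= s ->
     is_derive E s (B s - D s + C0 * (v s - Derive xd s) - C1 * Derive xd s)) ->
  (forall s, 0 <= s -> 0 <= D s) ->
  (forall s, 0 <= s -> continuous B s) ->
  (forall s, continuous v s) ->
  (forall s, is_derive xd s (Derive xd s)) ->
  0 <= t -> E t <= E 0 + RInt B 0 t + C0 * RInt v 0 t - (C0 + C1) * (xd t - xd 0).
Proof.
  intros HE HD HB Hv Hxd Ht.
  assert (Hbound := le_RInt_of_is_derive_le
    (fun s => E s - C0 * RInt v 0 s + (C0 + C1) * xd s) (fun s => B s - D s) B t).
  cbv beta in Hbound. rewrite (RInt_point 0 v : RInt v 0 0 = 0) in Hbound.
  enough (E t - C0 * RInt v 0 t + (C0 + C1) * xd t
          <= E 0 - C0 * 0 + (C0 + C1) * xd 0 + RInt B 0 t) by lra.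
  apply Hbound; [| exact HB | intros s Hs; specialize (HD s Hs); lra | exact Ht].
  intros s Hs.
  replace (B s - D s) with ((B s - D s + C0 * (v s - Derive xd s) - C1 * Derive xd s)
                            - C0 * v s + (C0 + C1) * Derive xd s) by ring.
  apply (is_derive_plus (fun s => E s - C0 * RInt v 0 s) (fun s => (C0 + C1) * xd s)).
  - apply (is_derive_minus E (fun s => C0 * RInt v 0 s)); [now apply HE |].
    now apply is_derive_scal, is_derive_RInt_continuous.
  - apply is_derive_scal, Hxd.
Qed.

Lemma heat_capacity_jump_pos (rhov rhol Cpv Cpl bv bl gamma : R) :
  0 < rhov -> 0 < rhol -> Cpv < Cpl ->
  bv = rhov * Cpv -> bl = rhol * Cpl -> gamma = rhov / rhol ->
  0 < bl * gamma - bv.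
Proof.
  intros Hrv Hrl HCp -> -> ->.
  replace (rhol * Cpl * (rhov / rhol) - rhov * Cpv) with (rhov * (Cpl - Cpv)) by (field; lra).
  nra.
Qed.

Definition energy_density (T x : R -> R -> R) (y s : R) : R := T y s ^ 2 * dx x y s.

Definition dissipation_density (T x : R -> R -> R) (y s : R) : R := / dx x y s * dx T y s ^ 2.

Definition energy_flux (be k : R) (u : R -> R) (T x : R -> R -> R) (y s : R) : R :=
  - be * (u s - dt x y s) * T y s ^ 2 + 2 * k * T y s * (/ dx x y s * dx T y s).

Section OnePhase.

Variables (be k : R) (u : R -> R) (T x : R -> R -> R).
Hypotheses (HT : C2_2d T) (Hx : C2_2d x).

Local Set Implicit Arguments.
Local Unset Strict Implicit.

Lemma dt_energy_density (y s : R) :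
  dt (energy_density T x) y s
  = 2 * T y s * dt T y s * dx x y s + T y s ^ 2 * dt (dx x) y s.
Proof.
  destruct HT as [[_ [T2 _]] _]. destruct Hx as [_ [[_ [dx2 _]] _]].
  apply is_derive_unique. unfold energy_density. auto_derive.
  - split; [apply T2 | split; [apply dx2 | exact I]].
  - unfold dt. ring.
Qed.

Lemma continuity_2d_pt_dt_energy_density (y s : R) :
  continuity_2d_pt (dt (energy_density T x)) y s.
Proof.
  destruct HT as [[_ [_ [T3 [_ T5]]]] _].
  destruct Hx as [[_ [_ [_ [x4 _]]]] [[_ [_ [_ [_ dx5]]]] _]].
  apply continuity_2d_pt_ext with
    (fun y s => 2 * T y s * dt T y s * dx x y s + T y s ^ 2 * dt (dx x) y s).
  - intros; symmetry; apply dt_energy_density.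
  - continuity_2d.
Qed.

Lemma continuity_2d_pt_dissipation_density (y s : R) :
  dx x y s <> 0 -> continuity_2d_pt (dissipation_density T x) y s.
Proof.
  destruct HT as [[_ [_ [_ [T4 _]]]] _]. destruct Hx as [[_ [_ [_ [x4 _]]]] _].
  intros HJ. apply continuity_2d_pt_mult.
  - now apply continuity_2d_pt_inv.
  - continuity_2d.
Qed.

Lemma is_derive_RInt_energy_density (a b t : R) :
  is_derive (fun s => RInt (fun y => energy_density T x y s) a b) t
    (RInt (fun y => dt (energy_density T x) y t) a b).
Proof.
  destruct HT as [[_ [T2 [T3 _]]] _]. destruct Hx as [[_ [_ [_ [x4 _]]]] [[_ [dx2 _]] _]].
  apply (is_derive_RInt_param (fun s y => energy_density T x y s)).
  - apply filter_forall. intros s y _. unfold energy_density. auto_derive.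
    split; [apply T2 | split; [apply dx2 | exact I]].
  - intros y _. apply (continuity_2d_pt_swap (dt (energy_density T x))).
    apply continuity_2d_pt_dt_energy_density.
  - apply filter_forall. intros s.
    apply (@ex_RInt_continuous R_CompleteNormedModule). intros y _.
    apply (continuity_2d_pt_fst (energy_density T x)). unfold energy_density.
    continuity_2d.
Qed.

Lemma is_derive_energy_flux (y t : R) :
  dx x y t <> 0 ->
  dt (dx x) y t = dx (dt x) y t ->
  be * (dt (fun y s => dx x y s * T y s) y t + dx (fun y s => (u s - dt x y s) * T y s) y t)
  = k * dx (fun y s => / dx x y s * dx T y s) y t ->
  is_derive (fun z => energy_flux be k u T x z t) y
    (be * dt (energy_density T x) y t + 2 * k * dissipation_density T x y t).
Proof.
  destruct HT as [[T1 [T2 _]] [[dT1 _] _]].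
  destruct Hx as [_ [[dx1 [dx2 _]] [tx1 _]]].
  intros HJ HGCL HPDE.
  assert (Hmass : dt (fun y s => dx x y s * T y s) y t
                  = dt (dx x) y t * T y t + dx x y t * dt T y t).
  { apply is_derive_unique. auto_derive.
    - split; [apply dx2 | split; [apply T2 | exact I]].
    - unfold dt; ring. }
  assert (Hadv : dx (fun y s => (u s - dt x y s) * T y s) y t
                 = - dx (dt x) y t * T y t + (u t - dt x y t) * dx T y t).
  { apply is_derive_unique. auto_derive.
    - split; [apply tx1 | split; [apply T1 | exact I]].
    - unfold dx; ring. }
  assert (Hgrad : dx (fun y s => / dx x y s * dx T y s) y t
                  = - dx (dx x) y t * / (dx x y t * dx x y t) * dx T y t
                    + / dx x y t * dx (dx T) y t).
  { apply is_derive_unique. auto_derive.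
    - repeat split; auto.
    - unfold dx; ring. }
  rewrite Hmass, Hadv, HGCL, Hgrad in HPDE.
  apply (f_equal (Rmult (2 * T y t))) in HPDE.
  unfold energy_flux. auto_derive.
  - repeat split; auto.
  - rewrite dt_energy_density, HGCL. unfold dissipation_density. unfold dx, dt in *. lra.
Qed.

Lemma RInt_dissipation_density_nonneg (a b t : R) :
  a <= b -> (forall y, a <= y <= b -> 0 < dx x y t) ->
  0 <= RInt (fun y => dissipation_density T x y t) a b.
Proof.
  intros Hab HJ. apply RInt_ge_0; [exact Hab | |].
  - apply (@ex_RInt_continuous R_CompleteNormedModule). intros y Hy.
    rewrite Rmin_left, Rmax_right in Hy by exact Hab.
    apply (continuity_2d_pt_fst (dissipation_density T x)).
    apply continuity_2d_pt_dissipation_density. specialize (HJ y Hy). lra.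
  - intros y Hy. unfold dissipation_density.
    apply Rmult_le_pos; [apply Rlt_le, Rinv_0_lt_compat, HJ; lra | apply pow2_ge_0].
Qed.

Lemma is_RInt_energy_balance (a b t : R) :
  a <= b ->
  (forall y, a <= y <= b -> 0 < dx x y t) ->
  (forall y, a <= y <= b -> dt (dx x) y t = dx (dt x) y t) ->
  (forall y, a <= y <= b ->
     be * (dt (fun y s => dx x y s * T y s) y t
           + dx (fun y s => (u s - dt x y s) * T y s) y t)
     = k * dx (fun y s => / dx x y s * dx T y s) y t) ->
  is_RInt (fun y => be * dt (energy_density T x) y t + 2 * k * dissipation_density T x y t)
    a b (energy_flux be k u T x b t - energy_flux be k u T x a t).
Proof.
  intros Hab HJ HGCL HPDE.
  apply (is_RInt_derive (fun z => energy_flux be k u T x z t));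
    intros y Hy; rewrite Rmin_left, Rmax_right in Hy by exact Hab;
    assert (HJy : dx x y t <> 0) by (specialize (HJ y Hy); lra).
  - apply is_derive_energy_flux; auto.
  - apply (continuity_2d_pt_fst
             (fun y s => be * dt (energy_density T x) y s
                         + 2 * k * dissipation_density T x y s)).
    apply continuity_2d_pt_plus; apply continuity_2d_pt_mult;
      try apply continuity_2d_pt_const.
    + apply continuity_2d_pt_dt_energy_density.
    + now apply continuity_2d_pt_dissipation_density.
Qed.

Lemma is_derive_phase_energy (a b t : R) :
  a <= b ->
  (forall y, a <= y <= b -> 0 < dx x y t) ->
  (forall y, a <= y <= b -> dt (dx x) y t = dx (dt x) y t) ->
  (forall y, a <= y <= b ->
     be * (dt (fun y s => dx x y s * T y s) y t
           + dx (fun y s => (u s - dt x y s) * T y s) y t)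
     = k * dx (fun y s => / dx x y s * dx T y s) y t) ->
  is_derive (fun s => be * RInt (fun y => energy_density T x y s) a b) t
    (energy_flux be k u T x b t - energy_flux be k u T x a t
     - 2 * k * RInt (fun y => dissipation_density T x y t) a b).
Proof.
  intros Hab HJ HGCL HPDE.
  assert (Hbalance := is_RInt_energy_balance Hab HJ HGCL HPDE).
  assert (Hsplit : is_RInt
            (fun y => be * dt (energy_density T x) y t + 2 * k * dissipation_density T x y t)
            a b (be * RInt (fun y => dt (energy_density T x) y t) a b
                 + 2 * k * RInt (fun y => dissipation_density T x y t) a b)).
  { apply (@is_RInt_plus R_NormedModule); apply (@is_RInt_scal R_NormedModule);
      apply (@RInt_correct R_CompleteNormedModule), (@ex_RInt_continuous R_CompleteNormedModule);
      intros y Hy; rewrite Rmin_left, Rmax_right in Hy by exact Hab.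
    - apply (continuity_2d_pt_fst (dt (energy_density T x))).
      apply continuity_2d_pt_dt_energy_density.
    - apply (continuity_2d_pt_fst (dissipation_density T x)).
      apply continuity_2d_pt_dissipation_density. specialize (HJ y Hy). lra. }
  replace (energy_flux be k u T x b t - energy_flux be k u T x a t
           - 2 * k * RInt (fun y => dissipation_density T x y t) a b)
    with (be * RInt (fun y => dt (energy_density T x) y t) a b).
  - apply is_derive_scal, is_derive_RInt_energy_density.
  - apply (@is_RInt_unique R_CompleteNormedModule) in Hbalance, Hsplit. lra.
Qed.

Lemma continuous_energy_flux (y t : R) :
  continuous u t -> dx x y t <> 0 -> continuous (fun s => energy_flux be k u T x y s) t.
Proof.
  destruct HT as [[_ [_ [T3 [T4 _]]]] _]. destruct Hx as [[_ [_ [_ [x4 x5]]]] _].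
  intros Hu HJ. apply (continuity_2d_pt_snd (energy_flux be k u T x)).
  unfold energy_flux. continuity_2d.
  - now apply continuity_2d_pt_time.
  - now apply continuity_2d_pt_inv.
Qed.

End OnePhase.

Lemma outer_terms_energy_flux (bv bl kv kl xi0 etan : R) (Tv xv Tl xl : R -> R -> R)
    (uv ul : R -> R) (t : R) :
  outer_terms bv bl kv kl xi0 etan Tv xv Tl xl uv ul t
  = energy_flux bl kl ul Tl xl etan t - energy_flux bv kv uv Tv xv xi0 t.
Proof. unfold outer_terms, energy_flux. ring. Qed.

Lemma interface_energy_flux_jump
    (rhov hlv bv bl kv kl gamma Tdelta delta w : R) (Tv xv Tl xl : R -> R -> R)
    (uv ul : R -> R) (t : R) :
  Tv delta t = Tdelta -> Tl delta t = Tdelta ->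
  dt xv delta t = w -> dt xl delta t = w ->
  ul t = gamma * uv t + (1 - gamma) * w ->
  rhov * hlv * w = kl * / dx xl delta t * dx Tl delta t - kv * / dx xv delta t * dx Tv delta t ->
  energy_flux bv kv uv Tv xv delta t - energy_flux bl kl ul Tl xl delta t
  = (bl * gamma - bv) * Tdelta ^ 2 * (uv t - w) - 2 * Tdelta * rhov * hlv * w.
Proof.
  intros HTv HTl Hwv Hwl Hmass Hstefan. unfold energy_flux.
  rewrite HTv, HTl, Hwv, Hwl, Hmass.
  apply (f_equal (Rmult (2 * Tdelta))) in Hstefan.
  lra.
Qed.

Section TwoPhase.

Variables (rhov hlv Tdelta bv bl kv kl gamma xi0 delta etan : R).
Variables (Tv Tl xv xl : R -> R -> R) (uv ul xdelta : R -> R).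
Hypotheses (Hdom : xi0 < delta < etan)
  (HTv : C2_2d Tv) (HTl : C2_2d Tl) (Hxv : C2_2d xv) (Hxl : C2_2d xl)
  (HJv : forall xi t, xi0 <= xi <= delta -> 0 <= t -> 0 < dx xv xi t)
  (HJl : forall eta t, delta <= eta <= etan -> 0 <= t -> 0 < dx xl eta t)
  (HGCLv : forall xi t, xi0 <= xi <= delta -> 0 <= t -> dt (dx xv) xi t = dx (dt xv) xi t)
  (HGCLl : forall eta t, delta <= eta <= etan -> 0 <= t -> dt (dx xl) eta t = dx (dt xl) eta t)
  (HPDEv : forall xi t, xi0 <= xi <= delta -> 0 <= t ->
     bv * (dt (fun y s => dx xv y s * Tv y s) xi t
           + dx (fun y s => (uv s - dt xv y s) * Tv y s) xi t)
     = kv * dx (fun y s => / dx xv y s * dx Tv y s) xi t)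
  (HPDEl : forall eta t, delta <= eta <= etan -> 0 <= t ->
     bl * (dt (fun y s => dx xl y s * Tl y s) eta t
           + dx (fun y s => (ul s - dt xl y s) * Tl y s) eta t)
     = kl * dx (fun y s => / dx xl y s * dx Tl y s) eta t)
  (Hxd : forall t, xv delta t = xdelta t /\ xl delta t = xdelta t)
  (HTint : forall t, 0 <= t -> Tv delta t = Tdelta /\ Tl delta t = Tdelta)
  (HStefan : forall t, 0 <= t ->
     rhov * hlv * Derive xdelta t
     = kl * / dx xl delta t * dx Tl delta t - kv * / dx xv delta t * dx Tv delta t)
  (Hmass : forall t, 0 <= t -> ul t = gamma * uv t + (1 - gamma) * Derive xdelta t).

(* Set only now, so that the binders of the hypotheses above stay explicit. *)
Local Set Implicit Arguments.
Local Unset Strict Implicit.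

Lemma dt_interface (t : R) :
  dt xv delta t = Derive xdelta t /\ dt xl delta t = Derive xdelta t.
Proof. split; apply Derive_ext; intros s; apply Hxd. Qed.

Lemma is_derive_interface (t : R) : is_derive xdelta t (Derive xdelta t).
Proof.
  destruct Hxv as [[_ [xv2 _]] _].
  apply Derive_correct, (ex_derive_ext (fun s => xv delta s)).
  - intros s. apply Hxd.
  - apply xv2.
Qed.

Lemma dissipation_nonneg (t : R) :
  0 < kv -> 0 < kl -> 0 <= t -> 0 <= dissipation kv kl xi0 delta etan Tv xv Tl xl t.
Proof.
  intros Hkv Hkl Ht.
  assert (Hv := RInt_dissipation_density_nonneg HTv Hxv
                  (Rlt_le _ _ (proj1 Hdom)) (fun y Hy => HJv y t Hy Ht)).
  assert (Hl := RInt_dissipation_density_nonneg HTl Hxl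
                  (Rlt_le _ _ (proj2 Hdom)) (fun y Hy => HJl y t Hy Ht)).
  unfold dissipation, dissipation_density in *. nra.
Qed.

Lemma continuous_outer_terms (t : R) :
  0 <= t -> continuous uv t -> continuous ul t ->
  continuous (outer_terms bv bl kv kl xi0 etan Tv xv Tl xl uv ul) t.
Proof.
  intros Ht Huv Hul.
  apply continuous_ext with
    (fun s => energy_flux bl kl ul Tl xl etan s - energy_flux bv kv uv Tv xv xi0 s).
  { intros s. symmetry. apply outer_terms_energy_flux. }
  apply (continuous_minus (fun s => energy_flux bl kl ul Tl xl etan s)).
  - apply continuous_energy_flux; auto. apply Rgt_not_eq, HJl; lra.
  - apply continuous_energy_flux; auto. apply Rgt_not_eq, HJv; lra.
Qed.

Lemma is_derive_energy (t : R) :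
  0 <= t ->
  is_derive (energy bv bl xi0 delta etan Tv xv Tl xl) t
    (outer_terms bv bl kv kl xi0 etan Tv xv Tl xl uv ul t
     - dissipation kv kl xi0 delta etan Tv xv Tl xl t
     + (bl * gamma - bv) * Tdelta ^ 2 * (uv t - Derive xdelta t)
     - 2 * Tdelta * rhov * hlv * Derive xdelta t).
Proof.
  intros Ht.
  assert (Hv := is_derive_phase_energy HTv Hxv (Rlt_le _ _ (proj1 Hdom))
                  (fun y Hy => HJv y t Hy Ht) (fun y Hy => HGCLv y t Hy Ht)
                  (fun y Hy => HPDEv y t Hy Ht)).
  assert (Hl := is_derive_phase_energy HTl Hxl (Rlt_le _ _ (proj2 Hdom))
                  (fun y Hy => HJl y t Hy Ht) (fun y Hy => HGCLl y t Hy Ht)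
                  (fun y Hy => HPDEl y t Hy Ht)).
  destruct (HTint t Ht) as [HTv_delta HTl_delta].
  destruct (dt_interface t) as [Hwv Hwl].
  assert (Hjump := interface_energy_flux_jump rhov hlv bv bl kv kl gamma Tdelta delta
                     (Derive xdelta t) Tv xv Tl xl uv ul t HTv_delta HTl_delta Hwv Hwl
                     (Hmass t Ht) (HStefan t Ht)).
  refine (eq_ind _ (is_derive (energy bv bl xi0 delta etan Tv xv Tl xl) t)
            (is_derive_plus _ _ _ _ _ Hv Hl) _ _).
  rewrite outer_terms_energy_flux. unfold dissipation, dissipation_density, plus. simpl. lra.
Qed.

End TwoPhase.

Theorem proposition1
  (rhov rhol Cpv Cpl kv kl hlv Tdelta bv bl gamma xi0 delta etan : R)
  (Tv Tl xv xl : R -> R -> R) (uv ul xdelta : R -> R)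
  (Hrho : 0 < rhov /\ 0 < rhol) (HCp : 0 < Cpv /\ 0 < Cpl) (HCpl : Cpv < Cpl)
  (Hbv : bv = rhov * Cpv) (Hbl : bl = rhol * Cpl) (Hgamma : gamma = rhov / rhol)
  (Hk : 0 < kv /\ 0 < kl) (Hh : 0 < hlv) (HT : 0 < Tdelta)
  (Hdom : xi0 < delta < etan)
  (HregT : C2_2d Tv /\ C2_2d Tl) (Hregx : C2_2d xv /\ C2_2d xl)
  (Hu : forall t, 0 <= t -> 0 < uv t /\ 0 < ul t)
  (Hucont : forall t, continuous uv t /\ continuous ul t)
  (HJv : forall xi t, xi0 <= xi <= delta -> 0 <= t -> 0 < dx xv xi t)
  (HJl : forall eta t, delta <= eta <= etan -> 0 <= t -> 0 < dx xl eta t)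
  (HGCLv : forall xi t, xi0 <= xi <= delta -> 0 <= t ->
     dt (dx xv) xi t = dx (dt xv) xi t)
  (HGCLl : forall eta t, delta <= eta <= etan -> 0 <= t ->
     dt (dx xl) eta t = dx (dt xl) eta t)
  (HPDEv : forall xi t, xi0 <= xi <= delta -> 0 <= t ->
     bv * (dt (fun y s => dx xv y s * Tv y s) xi t
           + dx (fun y s => (uv s - dt xv y s) * Tv y s) xi t)
     = kv * dx (fun y s => / dx xv y s * dx Tv y s) xi t)
  (HPDEl : forall eta t, delta <= eta <= etan -> 0 <= t ->
     bl * (dt (fun y s => dx xl y s * Tl y s) eta t
           + dx (fun y s => (ul s - dt xl y s) * Tl y s) eta t)
     = kl * dx (fun y s => / dx xl y s * dx Tl y s) eta t)
  (Hxd : forall t, xv delta t = xdelta t /\ xl delta t = xdelta t)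
  (HTint : forall t, 0 <= t -> Tv delta t = Tdelta /\ Tl delta t = Tdelta)
  (HStefan : forall t, 0 <= t ->
     rhov * hlv * Derive xdelta t
     = kl * / dx xl delta t * dx Tl delta t - kv * / dx xv delta t * dx Tv delta t)
  (Hmass : forall t, 0 <= t -> ul t = gamma * uv t + (1 - gamma) * Derive xdelta t) :
  let E := energy bv bl xi0 delta etan Tv xv Tl xl in
  let D := dissipation kv kl xi0 delta etan Tv xv Tl xl in
  let B := outer_terms bv bl kv kl xi0 etan Tv xv Tl xl uv ul in
  let C0 := (bl * gamma - bv) * Tdelta ^ 2 in
  let C1 := 2 * Tdelta * rhov * hlv in
  (* energy bounded in every case *)
  (forall t, 0 <= t ->
     E t <= E 0 + RInt B 0 t + C0 * RInt uv 0 t - (C0 + C1) * (xdelta t - xdelta 0))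
  /\
  (* dissipative (and energy bounded) when (a_v)_delta < 0 and u~_delta >= 0 *)
  ((forall t, 0 < t -> uv t - Derive xdelta t < 0 -> 0 <= Derive xdelta t ->
      Derive E t + D t - B t <= 0)
   /\
   ((forall t, 0 <= t -> uv t - Derive xdelta t < 0 /\ 0 <= Derive xdelta t) ->
      forall t, 0 <= t -> E t <= E 0 + RInt B 0 t)).
Proof.
  intros E D B C0 C1.
  destruct Hrho as [Hrv Hrl], Hk as [Hkv Hkl], HregT as [HTv HTl], Hregx as [Hxv Hxl].
  assert (HC0 : 0 < C0).
  { apply Rmult_lt_0_compat; [| now apply pow_lt].
    now apply (heat_capacity_jump_pos rhov rhol Cpv Cpl). }
  assert (HC1 : 0 < C1) by (unfold C1; repeat apply Rmult_lt_0_compat; lra).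
  assert (Hinterface : forall a w, a < 0 -> 0 <= w -> C0 * a - C1 * w <= 0) by (intros; nra).
  assert (HE : forall t, 0 <= t -> is_derive E t
            (B t - D t + C0 * (uv t - Derive xdelta t) - C1 * Derive xdelta t))
    by exact (is_derive_energy Hdom HTv HTl Hxv Hxl HJv HJl HGCLv HGCLl HPDEv HPDEl
                Hxd HTint HStefan Hmass).
  assert (HD : forall t, 0 <= t -> 0 <= D t)
    by (intros t; exact (dissipation_nonneg Hdom HTv HTl Hxv Hxl HJv HJl Hkv Hkl)).
  assert (HB : forall t, 0 <= t -> continuous B t)
    by (intros t Ht; exact (continuous_outer_terms Hdom HTv HTl Hxv Hxl HJv HJl Ht
                              (proj1 (Hucont t)) (proj2 (Hucont t)))).
  split; [|split].
  - intros t Ht. apply energy_le_of_rate with (D := D); auto.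
    + intros s. apply Hucont.
    + exact (is_derive_interface Hxv Hxd).
  - intros t Ht Ha Hw.
    rewrite (is_derive_unique _ _ _ (HE t (Rlt_le _ _ Ht))).
    specialize (Hinterface _ _ Ha Hw). lra.
  - intros Hsign t Ht.
    apply le_RInt_of_is_derive_le with (1 := HE); [exact HB | | exact Ht].
    intros s Hs. destruct (Hsign s Hs) as [Ha Hw].
    specialize (HD s Hs). specialize (Hinterface _ _ Ha Hw). lra.
Qed.
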